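(* Let $d\geq1$, fix $p_\rho\geq 0$, and let $\hat\rho$ be a $d\times d$ density operator with eigenvalue decomposition $\hat\rho=\sum_{i=1}^d\hat r_i|b_i\rangle\!\langle b_i|$ ($\{b_i\}$ an orthonormal basis). Consider (P1) maximize $\mathrm{Tr}(\hat\rho\sigma)+p_\rho\sqrt{1-\mathrm{Tr}(\sigma^2)}$ over $\sigma\in L(\mathbb C^d)$ subject to $\sigma\geq0$, $\mathrm{Tr}(\sigma)=1$; and (P2) maximize $\sum_{i=1}^d\hat r_is_i+p_\rho\sqrt{1-\sum_{i=1}^ds_i^2}$ over $(s_1,\dots,s_d)\in\mathbb R^d$ subject to $\sum_i s_i=1$, $s_i\geq0$ for all $i$. Then (P1) and (P2) are equivalent: they have the same optimal value, the map $(s_1,\dots,s_d)\mapsto\tilde\sigma=\sum_{i=1}^ds_i|b_i\rangle\!\langle b_i|$ is a one-to-one correspondence between feasible arrays of (P2) and density operators diagonal in the basis $\{b_i\}$, preserving objective values, and for every feasible $\sigma$ of (P1) there is such a $\tilde\sigma$ with objective value at least that of $\sigma$. *)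

From HB Require Import structures.
From mathcomp Require Import all_boot all_order all_algebra.
From mathcomp.real_closed Require Import complex.
Set Implicit Arguments. Unset Strict Implicit. Unset Printing Implicit Defensive.
Import Order.TTheory GRing.Theory Num.Theory.
Local Open Scope ring_scope.

Section Defs.
Variables (R : rcfType) (d : nat).
Local Notation C := R[i].

Definition adj m n (A : 'M[C]_(m, n)) : 'M[C]_(n, m) := (map_mx (@conjc R) A)^T.

Definition ketbra (v w : 'cV[C]_d) : 'M[C]_d := v *m adj w.

Definition hermitian (A : 'M[C]_d) : Prop := adj A = A.

Definition psd (A : 'M[C]_d) : Prop :=
  hermitian A /\ forall v : 'cV[C]_d, 0 <= (adj v *m A *m v) 0 0.

Definition density (A : 'M[C]_d) : Prop := psd A /\ \tr A = 1.

Definition orthonormal_basis (b : 'I_d -> 'cV[C]_d) : Prop :=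
  forall i j, (adj (b i) *m b j) 0 0 = (i == j)%:R.

(* objective of (P1): Tr(rho sigma) + p sqrt(1 - Tr(sigma^2));
   the traces are real for Hermitian arguments, we take their real parts *)
Definition obj1 (rho : 'M[C]_d) (p : R) (sigma : 'M[C]_d) : R :=
  @complex.Re R (\tr (rho *m sigma)) + p * Num.sqrt (1 - @complex.Re R (\tr (sigma *m sigma))).

Definition feasible2 (s : 'I_d -> R) : Prop :=
  \sum_i s i = 1 /\ forall i, 0 <= s i.

Definition obj2 (r : 'I_d -> R) (p : R) (s : 'I_d -> R) : R :=
  \sum_i r i * s i + p * Num.sqrt (1 - \sum_i s i ^+ 2).

Definition sigma_tilde (b : 'I_d -> 'cV[C]_d) (s : 'I_d -> R) : 'M[C]_d :=
  \sum_i (s i)%:C%C *: ketbra (b i) (b i).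

Definition diag_in (b : 'I_d -> 'cV[C]_d) (sigma : 'M[C]_d) : Prop :=
  exists c : 'I_d -> C, sigma = \sum_i c i *: ketbra (b i) (b i).

End Defs.

(* Let B be the unitary matrix whose columns are the b_i, and N = B^* sigma B
   the matrix of sigma in that basis.  Since rho is diagonal in {b_i},
   Tr(rho sigma) only sees the diagonal s_i = N_ii, which is a feasible array
   of (P2) when sigma is a density operator; and for Hermitian N,
   Tr(sigma^2) = Tr(N^2) = sum_i s_i^2 + sum_{i <> j} |N_ij|^2 >= sum_i s_i^2.
   So replacing sigma by the diagonal operator sum_i s_i |b_i><b_i| keeps the
   first term and can only increase the second (p >= 0), while on diagonal
   operators the two objectives coincide. *)
From Pilot Require Import Defs.
From HB Require Import structures.
From mathcomp Require Import all_boot all_order all_algebra.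
From mathcomp.real_closed Require Import complex.
Import Order.TTheory GRing.Theory Num.Theory.
Set Implicit Arguments.
Unset Strict Implicit.
Unset Printing Implicit Defensive.
Local Open Scope ring_scope.

Section OptimumTransfer.
Variables (disp : Order.disp_t) (V : porderType disp) (A B : Type).
Variables (feas1 : A -> Prop) (feas2 : B -> Prop) (f1 : A -> V) (f2 : B -> V).
Variable embed : B -> A.
Hypothesis embed_feas : forall s, feas2 s -> feas1 (embed s).
Hypothesis embed_obj : forall s, feas2 s -> f1 (embed s) = f2 s.
Hypothesis dominated : forall x, feas1 x -> exists s, feas2 s /\ (f1 x <= f2 s)%O.

Lemma upper_bound_transfer v :
  (forall x, feas1 x -> (f1 x <= v)%O) <-> (forall s, feas2 s -> (f2 s <= v)%O).
Proof.
split=> ub.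
  by move=> s hs; rewrite -embed_obj //; apply: ub; apply: embed_feas.
move=> x /dominated[s [hs le_xs]]; exact: le_trans le_xs (ub s hs).
Qed.

Lemma max_transfer v :
  ((exists x, feas1 x /\ f1 x = v) /\ (forall x, feas1 x -> (f1 x <= v)%O)) <->
  ((exists s, feas2 s /\ f2 s = v) /\ (forall s, feas2 s -> (f2 s <= v)%O)).
Proof.
rewrite upper_bound_transfer; split=> -[[y [hy <-]] ub]; split=> //.
- have [s [hs le_ys]] := dominated hy.
  by exists s; split=> //; apply/le_anti; rewrite le_ys ub.
- by exists (embed y); rewrite embed_obj //; split=> //; apply: embed_feas.
Qed.

End OptimumTransfer.

Section ComplexMatrices.
Variable R : rcfType.
Local Notation C := R[i].
Local Notation Re := (@complex.Re R).

Lemma adj_mul m n q (M : 'M[C]_(m, n)) (N : 'M[C]_(n, q)) :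
  adj (M *m N) = adj N *m adj M.
Proof. by rewrite /adj map_mxM trmx_mul. Qed.

Lemma adjK m n (M : 'M[C]_(m, n)) : adj (adj M) = M.
Proof. by apply/matrixP=> i j; rewrite !mxE conjcK. Qed.

Lemma adj_entry m n (M : 'M[C]_(m, n)) i j : adj M i j = (M j i)^*%C.
Proof. by rewrite !mxE. Qed.

Lemma Re_realM (x : R) (z : C) : Re (x%:C%C * z) = x * Re z.
Proof. by case: z => a c; rewrite /= mul0r subr0. Qed.

Lemma complex_ge0_Re (z : C) : 0 <= z -> z = (Re z)%:C%C.
Proof. by move=> /ger0_Im; case: z => a c /= ->. Qed.

Lemma Re_ge0 (z : C) : 0 <= z -> 0 <= Re z.
Proof. by rewrite lecE => /andP[]. Qed.

Lemma Re_tr_diag_realM n (r : 'I_n -> R) (N : 'M[C]_n) :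
  Re (\tr (diag_mx (\row_i (r i)%:C%C) *m N)) = \sum_i r i * Re (N i i).
Proof.
rewrite mul_diag_mx /mxtrace raddf_sum; apply: eq_bigr => i _.
by rewrite !mxE; apply: Re_realM.
Qed.

Lemma adj_diag_real n (s : 'I_n -> R) :
  adj (diag_mx (\row_i (s i)%:C%C)) = diag_mx (\row_i (s i)%:C%C).
Proof.
apply/matrixP=> i j; rewrite !mxE eq_sym.
by case: (eqVneq i j) => [->|_]; rewrite ?mulr1n ?conjc_real ?mulr0n ?conjc0.
Qed.

(* Hermitian symmetry makes every off-diagonal term N_ij N_ji = |N_ij|^2
   of the diagonal entry (N^2)_ii nonnegative. *)
Lemma hermitian_sqr_diag_ge n (N : 'M[C]_n) i :
  adj N = N -> Re (N i i) ^+ 2 <= Re ((N *m N) i i).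
Proof.
move=> hN; have N_sym j k : N k j = (N j k)^*%C by rewrite -{1}hN adj_entry.
have Nii_real : N i i = (Re (N i i))%:C%C.
  by rewrite RRe_real // CrealE; apply/eqP; exact: (esym (N_sym i i)).
rewrite mxE (bigD1 i) //= raddfD /= {2}Nii_real Re_realM expr2 lerDl.
apply: Re_ge0; apply: sumr_ge0 => j _.
by rewrite (N_sym i j) mulcJ_ge0.
Qed.

End ComplexMatrices.

Section Basis.
Variables (R : rcfType) (d : nat) (b : 'I_d -> 'cV[R[i]]_d).
Local Notation C := R[i].
Local Notation Re := (@complex.Re R).

Definition basis_mx : 'M[C]_d := \matrix_(k, i) b i k 0.

Definition in_basis (M : 'M[C]_d) : 'M[C]_d := adj basis_mx *m M *m basis_mx.

Local Notation B := basis_mx.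
Local Notation diag_real s := (diag_mx (\row_i (s i)%:C%C)).

Lemma sum_ketbra_basis (c : 'I_d -> C) :
  \sum_i c i *: ketbra (b i) (b i) = B *m diag_mx (\row_i c i) *m adj B.
Proof.
apply/matrixP=> k l; rewrite summxE mul_mx_diag mxE.
by apply: eq_bigr => i _; rewrite !mxE big_ord1 adj_entry mulrCA mulrA.
Qed.

Lemma in_basisE M i j : in_basis M i j = (adj (b i) *m M *m b j) 0 0.
Proof.
rewrite !mxE; apply: eq_bigr => k _; rewrite !mxE; congr (_ * _).
by apply: eq_bigr => l _; rewrite !mxE.
Qed.

Lemma adj_in_basis M : adj (in_basis M) = in_basis (adj M).
Proof. by rewrite /in_basis !adj_mul adjK mulmxA. Qed.

Hypothesis hb : orthonormal_basis b.

Lemma basis_mx_unitary : adj B *m B = 1.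
Proof.
apply/matrixP=> i j; rewrite [RHS]mxE -(hb i j) !mxE.
by apply: eq_bigr => k _; rewrite !mxE.
Qed.

Lemma basis_mx_unitaryC : B *m adj B = 1.
Proof. exact: mulmx1C basis_mx_unitary. Qed.

Lemma in_basisK M : B *m in_basis M *m adj B = M.
Proof.
by rewrite /in_basis !mulmxA basis_mx_unitaryC mul1mx -mulmxA basis_mx_unitaryC mulmx1.
Qed.

Lemma in_basis_conj X : in_basis (B *m X *m adj B) = X.
Proof.
by rewrite /in_basis !mulmxA basis_mx_unitary mul1mx -mulmxA basis_mx_unitary mulmx1.
Qed.

Lemma conj_mulmx X Y : (B *m X *m adj B) *m (B *m Y *m adj B) = B *m (X *m Y) *m adj B.
Proof. by rewrite -!mulmxA (mulmxA (adj B)) basis_mx_unitary mul1mx. Qed.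

Lemma mxtrace_conj X : \tr (B *m X *m adj B) = \tr X.
Proof. by rewrite mxtrace_mulC mulmxA basis_mx_unitary mul1mx. Qed.

Lemma sigma_tildeE s : sigma_tilde b s = B *m diag_real s *m adj B.
Proof. exact: sum_ketbra_basis. Qed.

Lemma in_basis_sigma_tilde s : in_basis (sigma_tilde b s) = diag_real s.
Proof. by rewrite sigma_tildeE in_basis_conj. Qed.

Lemma sigma_tilde_inj s s' : sigma_tilde b s = sigma_tilde b s' -> s =1 s'.
Proof.
move=> /(congr1 in_basis) e i; move/matrixP/(_ i i): e.
by rewrite !in_basis_sigma_tilde !mxE eqxx !mulr1n => /complexI.
Qed.

Lemma sigma_tilde_density s : feasible2 s -> density (sigma_tilde b s).
Proof.
case=> sum_s1 s_ge0; rewrite sigma_tildeE; split; [split|].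
- by rewrite /Defs.hermitian !adj_mul adjK adj_diag_real mulmxA.
- move=> v; set w := adj B *m v.
  have -> : adj v *m (B *m diag_real s *m adj B) *m v = adj w *m diag_real s *m w.
    by rewrite /w adj_mul adjK !mulmxA.
  rewrite mul_mx_diag mxE; apply: sumr_ge0 => k _; rewrite !mxE mulrAC.
  by apply: mulr_ge0; [rewrite mulrC mulcJ_ge0 | rewrite ler0c].
- rewrite mxtrace_conj mxtrace_diag.
  by under eq_bigr do rewrite mxE; rewrite -rmorph_sum sum_s1.
Qed.

Lemma density_in_basis_diag M i :
  density M -> in_basis M i i = (Re (in_basis M i i))%:C%C.
Proof. by case=> -[_ M_psd] _; apply: complex_ge0_Re; rewrite in_basisE. Qed.

Lemma density_diag_feasible M : density M -> feasible2 (fun i => Re (in_basis M i i)).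
Proof.
move=> hM; have [[_ M_psd] trM1] := hM; split.
  have trN1 : \tr (in_basis M) = 1 by rewrite -trM1 -{2}(in_basisK M) mxtrace_conj.
  by move: (congr1 Re trN1); rewrite raddf_sum.
by move=> i; apply: Re_ge0; rewrite in_basisE.
Qed.

Lemma density_diag_in M : density M -> diag_in b M ->
  M = sigma_tilde b (fun i => Re (in_basis M i i)).
Proof.
move=> hM [c Mc]; have N_diag : in_basis M = diag_mx (\row_i c i).
  by rewrite Mc sum_ketbra_basis in_basis_conj.
rewrite {1}Mc; apply: eq_bigr => i _; congr (_ *: _).
by rewrite -density_in_basis_diag // N_diag !mxE eqxx mulr1n.
Qed.

Variables (rho : 'M[C]_d) (r : 'I_d -> R) (p : R).
Hypothesis rho_diag : rho = \sum_i (r i)%:C%C *: ketbra (b i) (b i).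

Lemma obj1_in_basis M :
  obj1 rho p M = \sum_i r i * Re (in_basis M i i)
                 + p * Num.sqrt (1 - Re (\tr (in_basis M *m in_basis M))).
Proof.
rewrite /obj1 -[in LHS](in_basisK M) rho_diag sum_ketbra_basis.
by rewrite !conj_mulmx !mxtrace_conj Re_tr_diag_realM.
Qed.

Lemma obj1_sigma_tilde s : obj1 rho p (sigma_tilde b s) = obj2 r p s.
Proof.
rewrite obj1_in_basis in_basis_sigma_tilde Re_tr_diag_realM /obj2.
congr (_ + _ * Num.sqrt (1 - _)); apply: eq_bigr => i _;
  by rewrite !mxE eqxx mulr1n ?expr2.
Qed.

Lemma density_dominated M : 0 <= p -> density M ->
  obj1 rho p M <= obj2 r p (fun i => Re (in_basis M i i)).
Proof.
move=> p_ge0 hM; rewrite obj1_in_basis /obj2 lerD2l.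
apply: ler_wpM2l => //; apply: ler_wsqrtr; rewrite lerD2l lerN2.
rewrite /mxtrace raddf_sum; apply: ler_sum => i _.
by apply: hermitian_sqr_diag_ge; rewrite adj_in_basis hM.1.1.
Qed.

End Basis.

Theorem lemma1 (R : rcfType) (d : nat) (hd : (0 < d)%N) (p : R) (hp : 0 <= p)
  (rho : 'M[R[i]]_d) (r : 'I_d -> R) (b : 'I_d -> 'cV[R[i]]_d)
  (hrho : density rho) (hb : orthonormal_basis b)
  (hdec : rho = \sum_i (r i)%:C%C *: ketbra (b i) (b i)) :
  (* same optimal value: same upper bounds (hence same supremum) ... *)
  (forall v : R,
     (forall sigma, density sigma -> obj1 rho p sigma <= v) <->
     (forall s, feasible2 s -> obj2 r p s <= v)) /\
  (* ... and v is the (attained) optimum of (P1) iff it is that of (P2) *)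
  (forall v : R,
     ((exists sigma, density sigma /\ obj1 rho p sigma = v) /\
      (forall sigma, density sigma -> obj1 rho p sigma <= v)) <->
     ((exists s, feasible2 s /\ obj2 r p s = v) /\
      (forall s, feasible2 s -> obj2 r p s <= v))) /\
  (* s |-> sigma~ maps feasible arrays to density operators diagonal in {b_i} *)
  (forall s, feasible2 s -> density (sigma_tilde b s) /\ diag_in b (sigma_tilde b s)) /\
  (* injective on feasible arrays *)
  (forall s s', feasible2 s -> feasible2 s' ->
     sigma_tilde b s = sigma_tilde b s' -> s =1 s') /\
  (* surjective onto density operators diagonal in {b_i} *)
  (forall sigma, density sigma -> diag_in b sigma ->
     exists s, feasible2 s /\ sigma = sigma_tilde b s) /\
  (* preserves objective values *)
  (forall s, feasible2 s -> obj1 rho p (sigma_tilde b s) = obj2 r p s) /\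
  (* every feasible sigma is dominated by some diagonal sigma~ *)
  (forall sigma, density sigma ->
     exists s, feasible2 s /\ obj1 rho p sigma <= obj1 rho p (sigma_tilde b s)).
Proof.
have obj_eq s (_ : feasible2 s) := obj1_sigma_tilde hb p hdec s.
have embed_feas := sigma_tilde_density hb.
have dominated sigma : density sigma ->
    exists s, feasible2 s /\ obj1 rho p sigma <= obj2 r p s.
  move=> hsigma; exists (fun i => complex.Re (in_basis b sigma i i)).
  by split; [exact: density_diag_feasible | exact: density_dominated].
split; first exact: upper_bound_transfer embed_feas obj_eq dominated.
split; first exact: max_transfer embed_feas obj_eq dominated.
split; first by move=> s hs; split; [exact: embed_feas | exists (fun i => (s i)%:C%C)].
split; first by move=> s s' _ _; apply: sigma_tilde_inj.
split.
  move=> sigma hsigma sigma_diag; exists (fun i => complex.Re (in_basis b sigma i i)).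
  by split; [exact: density_diag_feasible | exact: density_diag_in].
split; first exact: obj_eq.
by move=> sigma /dominated[s [hs le_s]]; exists s; rewrite (obj_eq s hs).
Qed.
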